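(* Let $f \in \mathbb{F}_q[x]$ be a polynomial of degree $n$, let $\tilde{\sigma}(x) = x^{q^t} \bmod f$ be a power of the Frobenius of $\mathbb{F}_q[x] / f$, and let $d = p_1^{e_1} p_2^{e_2} \cdots p_\ell^{e_\ell}$ be an integer given in factored form (distinct primes $p_i$, $e_i\ge1$). Then the sequence $\tilde{\sigma}^{d / p_1}(x) \bmod f, \dots, \tilde{\sigma}^{d / p_\ell}(x) \bmod f$ can be computed in $O(\mathsf{C}(n)(\log \ell)(\log d) + \ell\,\mathsf{M}(n))$ operations in $\mathbb{F}_q$.
   Context: The Frobenius of $\mathbb{F}_q[x]/f$ is the $\mathbb{F}_q$-algebra endomorphism determined by $x\mapsto x^q$; a power $\tilde\sigma$ of it is represented by $\tilde\sigma(x)\in\mathbb{F}_q[x]/f$, and $\tilde\sigma^{k}(x)$ denotes the $k$-fold composition, computed by modular composition. $\mathsf{M}(n)$ denotes the cost of multiplying two polynomials of degree $n$ over $\mathbb{F}_q$, and $\mathsf{C}(n)$ denotes the cost of a modular composition $g(h)\bmod f$ for polynomials of degree $n$. *)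

From HB Require Import structures.
From mathcomp Require Import all_boot all_order all_algebra.
Set Implicit Arguments. Unset Strict Implicit. Unset Printing Implicit Defensive.
Import GRing.Theory.
Local Open Scope ring_scope.

(* Each instruction costs one operation in F.  Registers are numbered from 0;
   the inputs occupy the first registers, each instruction appends one register. *)
Inductive instr (F : Type) :=
| IConst of F
| IAdd of nat & nat
| ISub of nat & nat
| IMul of nat & nat
| IInv of nat.   (* field inverse, total (0^-1 = 0) *)

Record slp (F : Type) := SLP { slp_instrs : seq (instr F); slp_outs : seq nat }.

Definition slp_cost (F : Type) (P : slp F) : nat := size (slp_instrs P).

Definition exec_instr (F : fieldType) (env : seq F) (i : instr F) : F :=
  match i with
  | IConst c => c
  | IAdd a b => env`_a + env`_b
  | ISub a b => env`_a - env`_b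
  | IMul a b => env`_a * env`_b
  | IInv a => (env`_a)^-1
  end.

Definition slp_eval (F : fieldType) (P : slp F) (inp : seq F) : seq F :=
  let env := foldl (fun env i => rcons env (exec_instr env i)) inp (slp_instrs P) in
  [seq env`_j | j <- slp_outs P].

Definition coefs (F : fieldType) (k : nat) (p : {poly F}) : seq F :=
  [seq p`_i | i <- iota 0 k].

Definition mul_cost_bound (F : fieldType) (M : nat -> nat) : Prop :=
  forall n, exists P : slp F, (slp_cost P <= M n)%N /\
    forall a b : {poly F}, (size a <= n.+1)%N -> (size b <= n.+1)%N ->
      slp_eval P (coefs n.+1 a ++ coefs n.+1 b) = coefs (n + n).+1 (a * b).

Definition modcomp_cost_bound (F : fieldType) (C : nat -> nat) : Prop :=
  forall n, exists P : slp F, (slp_cost P <= C n)%N /\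
    forall f g h : {poly F}, size f = n.+1 -> (size g <= n)%N -> (size h <= n)%N ->
      slp_eval P (coefs n.+1 f ++ coefs n g ++ coefs n h) = coefs n ((g \Po h) %% f).

(* sigma is the F-algebra endomorphism of F[x]/f with sigma(x) = s;
   sigma^k(x) mod f, computed by k-fold modular composition *)
Definition sigma_pow (F : fieldType) (f s : {poly F}) (k : nat) : {poly F} :=
  iter k (fun h => (s \Po h) %% f) ('X %% f).

Definition factored_form (ps : seq (nat * nat)) : bool :=
  uniq (map fst ps) && all (fun pe => prime pe.1 && (0 < pe.2)%N) ps.

Definition fvalue (ps : seq (nat * nat)) : nat := (\prod_(pe <- ps) pe.1 ^ pe.2)%N.

From HB Require Import structures.
From mathcomp Require Import all_boot all_order all_algebra all_field.
From mathcomp Require Import zify.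
Import GRing.Theory.
Set Implicit Arguments. Unset Strict Implicit. Unset Printing Implicit Defensive.

(* Write q = #|F| and [frob_mod f m] for x^(q^m) mod f, the image of x under
   the m-th power of the Frobenius.  Since g(x^(q^b)) = g^(q^b) for g over F_q,
   composition modulo f adds exponents: sigma^k(x) = frob_mod f (t k), and one
   run of the modular-composition program turns representatives of the
   exponents a and b into one of a + b.  Square-and-multiply therefore goes
   from a to a m with 2 log m compositions.  The values sigma^(d/p_i)(x) are
   obtained by splitting the factor list into halves A and B, raising to the
   part of d coming from B before recursing on A, and symmetrically; each of
   the log l levels of this recursion costs O(log d) compositions.  No multiplication is needed, so the term l M(n) is slack. *)

Section PolyMod.
Variable F : fieldType.
Local Open Scope ring_scope.
Implicit Types f p h : {poly F}.

Lemma modp_exp f p k : ((p %% f) ^+ k) %% f = (p ^+ k) %% f.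
Proof.
elim: k => [|k IH]; first by rewrite !expr0.
by rewrite !exprS -[LHS]modp_mul IH modp_mul mulrC modp_mul mulrC.
Qed.

Lemma modp_compr f p h : (p \Po (h %% f)) %% f = (p \Po h) %% f.
Proof.
elim/poly_ind: p => [|p c IH]; first by rewrite !comp_poly0.
rewrite !comp_poly_MXaddC !modpD; congr (_ + _).
by rewrite -[LHS]modp_mul mulrC -[LHS]modp_mul IH modp_id modp_mul mulrC modp_mul.
Qed.

End PolyMod.

Section Frobenius.
Variable F : finFieldType.
Implicit Types f : {poly F}.
Local Open Scope ring_scope.
Local Notation q := #|F|.

Lemma card_pchar_nat : [pchar F].-nat q.
Proof.
have [p pr_p pF] := finPcharP F.
by rewrite (card_pprimeChar pF) pnatX pnatE ?pF.
Qed.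

Lemma expf_card_exp (x : F) m : x ^+ (q ^ m)%N = x.
Proof. by elim: m => [|m IH]; rewrite ?expr1 // expnSr exprM IH expf_card. Qed.

Lemma poly_exp_cardE (g : {poly F}) m : g ^+ (q ^ m)%N = g \Po 'X^(q ^ m)%N.
Proof.
have q_gt0 : (0 < q ^ m)%N by rewrite expn_gt0 (ltn_trans _ (finNzRing_gt1 F)).
have pchar_qm : [pchar {poly F}].-nat (q ^ m)%N.
  by rewrite (eq_pnat _ (@pchar_poly F)) pnatX card_pchar_nat.
elim/poly_ind: g => [|g c IH]; first by rewrite comp_poly0 expr0n eqn0Ngt q_gt0.
rewrite exprDn_pchar // exprMn IH -rmorphXn /= expf_card_exp.
by rewrite comp_poly_MXaddC.
Qed.

Definition frob_mod (f : {poly F}) m := 'X^(q ^ m)%N %% f.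

Lemma frob_mod_comp f a b :
  (frob_mod f a \Po frob_mod f b) %% f = frob_mod f (a + b).
Proof.
by rewrite /frob_mod modp_compr -poly_exp_cardE modp_exp -exprM -expnD.
Qed.

Lemma sigma_pow_frob_mod f t k :
  sigma_pow f (frob_mod f t) k = frob_mod f (t * k).
Proof.
elim: k => [|k IH]; first by rewrite muln0 /frob_mod expn0 expr1.
by rewrite /sigma_pow iterS -/(sigma_pow _ _ _) IH frob_mod_comp mulnS.
Qed.

Lemma size_frob_mod f n m : size f = n.+1 -> (size (frob_mod f m) <= n)%N.
Proof.
move=> sf; have f_neq0 : f != 0 by rewrite -size_poly_eq0 sf.
by rewrite -ltnS -sf ltn_modp.
Qed.

End Frobenius.

Lemma size_coefs (F : fieldType) k (p : {poly F}) : size (coefs k p) = k.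
Proof. by rewrite size_map size_iota. Qed.

Definition ref_lt (n : nat) (r : option nat) : bool :=
  if r is Some i then i < n else true.

Definition input_refs (i k : nat) : seq (option nat) := map Some (iota i k).

Definition extends (T : Type) (st st' : seq T) (c : nat) :=
  exists2 e, st' = st ++ e & size e <= c.

Lemma extends_refl (T : Type) (st : seq T) c : extends st st c.
Proof. by exists [::]; rewrite ?cats0. Qed.

Lemma extends_trans (T : Type) (st1 st2 st3 : seq T) c1 c2 :
  extends st1 st2 c1 -> extends st2 st3 c2 -> extends st1 st3 (c1 + c2).
Proof.
case=> e1 -> s1 [e2 -> s2]; exists (e1 ++ e2); first by rewrite catA.
by rewrite size_cat leq_add.
Qed.

Lemma extends_le (T : Type) (st st' : seq T) c c' :
  c <= c' -> extends st st' c -> extends st st' c'.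
Proof. by move=> le_c [e -> se]; exists e; last exact: leq_trans le_c. Qed.

Section StraightLinePrograms.
Variable F : fieldType.
Local Open Scope ring_scope.
Implicit Types (env inp x : seq F) (ins qs : seq (instr F)) (rs : seq (option nat)).

Definition run env ins : seq F :=
  foldl (fun env i => rcons env (exec_instr env i)) env ins.

Lemma run_cat env ins ins' : run env (ins ++ ins') = run (run env ins) ins'.
Proof. exact: foldl_cat. Qed.

Lemma run_rcons env ins i :
  run env (rcons ins i) = rcons (run env ins) (exec_instr (run env ins) i).
Proof. by rewrite -cats1 run_cat. Qed.

Lemma run_prefix env ins : exists2 x, run env ins = env ++ x & size x = size ins.
Proof.
elim/last_ind: ins => [|ins i [x run_x sx]]; first by exists [::]; rewrite ?cats0.
exists (rcons x (exec_instr (env ++ x) i)); last by rewrite !size_rcons sx.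
by rewrite run_rcons run_x rcons_cat.
Qed.

Lemma size_run env ins : size (run env ins) = (size env + size ins)%N.
Proof. by have [x -> sx] := run_prefix env ins; rewrite size_cat sx. Qed.

Definition reloc (r : nat -> nat) (i : instr F) : instr F :=
  match i with
  | IConst c => IConst c
  | IAdd a b => IAdd F (r a) (r b)
  | ISub a b => ISub F (r a) (r b)
  | IMul a b => IMul F (r a) (r b)
  | IInv a => IInv F (r a)
  end.

Lemma exec_reloc r env env' i :
  (forall j, env'`_(r j) = env`_j) -> exec_instr env' (reloc r i) = exec_instr env i.
Proof. by move=> r_env; case: i => /= *; rewrite ?r_env. Qed.

Definition read env (r : option nat) : F := if r is Some i then env`_i else 0.

Definition stores env rs (c : seq F) :=
  all (ref_lt (size env)) rs /\ map (read env) rs = c.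

Lemma stores_catr env x rs c : stores env rs c -> stores (env ++ x) rs c.
Proof.
case=> /allP rs_lt <-; split.
  apply/allP => -[i|] // /rs_lt /= i_lt.
  by rewrite size_cat (leq_trans i_lt) ?leq_addr.
by apply/eq_in_map => -[i|] // /rs_lt /= i_lt; rewrite nth_cat i_lt.
Qed.

Lemma stores_cat env rs1 rs2 c1 c2 :
  stores env rs1 c1 -> stores env rs2 c2 -> stores env (rs1 ++ rs2) (c1 ++ c2).
Proof. by case=> lt1 <- [lt2 <-]; rewrite /stores all_cat lt1 lt2 map_cat. Qed.

Lemma stores_input_refs (a b c : seq F) :
  stores (a ++ b ++ c) (input_refs (size a) (size b)) b.
Proof.
split.
  apply/allP => r /mapP[j]; rewrite mem_iota => /andP[_ j_lt] ->.
  by rewrite /= !size_cat addnA (leq_trans j_lt) ?leq_addr.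
rewrite -map_comp -[size a]addn0 iotaDl -map_comp -[RHS](mkseq_nth 0).
apply/eq_in_map => j; rewrite mem_iota => /andP[_ j_lt] /=.
by rewrite nth_cat ltnNge leq_addr addKn nth_cat j_lt.
Qed.

Lemma nth_odflt env z r : (size env <= z)%N -> env`_(odflt z r) = read env r.
Proof. by case: r => [i|] //= le_z; rewrite nth_default. Qed.

(* Inlining a subprogram with [nq] instructions after an environment of size
   [base]: its input register [j] is read through [nth None rs j], its other
   registers are shifted to [base + (j - size rs)]; registers it never writes
   read 0, hence [None], and [call_reg] sends them past the end of the
   environment. *)
Definition call_ref (base nq : nat) rs (j : nat) : option nat :=
  if (j < size rs)%N then nth None rs j
  else if (j - size rs < nq)%N then Some (base + (j - size rs))%N else None.

Definition call_reg (base nq : nat) rs (j : nat) : nat :=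
  odflt (base + nq)%N (call_ref base nq rs j).

Lemma call_ref_lt env nq rs j :
  all (ref_lt (size env)) rs -> ref_lt (size env + nq) (call_ref (size env) nq rs j).
Proof.
move=> /allP rs_lt; rewrite /call_ref; case: ltnP => [j_lt | _].
  by have := rs_lt _ (mem_nth None j_lt); case: nth => //= i /ltn_addr.
by case: ltnP => //= j_lt; rewrite ltn_add2l.
Qed.

Lemma read_call_ref env inp x nq rs j :
  stores env rs inp -> (size x <= nq)%N ->
  read (env ++ x) (call_ref (size env) nq rs j) = (inp ++ x)`_j.
Proof.
case=> /allP rs_lt rs_inp sx.
have size_rs : size rs = size inp by rewrite -rs_inp size_map.
rewrite /call_ref nth_cat -size_rs; case: ltnP => [j_lt | j_ge].
  rewrite -rs_inp (nth_map None) //.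
  have := rs_lt _ (mem_nth None j_lt).
  by case: nth => //= i i_lt; rewrite nth_cat i_lt.
case: ltnP => /= [_ | x_le]; first by rewrite nth_cat ltnNge leq_addr addKn.
by rewrite nth_default // (leq_trans sx).
Qed.

Lemma run_call env inp nq rs qs :
  stores env rs inp -> (size qs <= nq)%N ->
  run env (map (reloc (call_reg (size env) nq rs)) qs)
  = env ++ drop (size inp) (run inp qs).
Proof.
move=> env_rs; elim/last_ind: qs => [|qs i IH] sq; first by rewrite drop_size cats0.
have sq' : (size qs < nq)%N by rewrite -(size_rcons qs i).
have [x run_x sx] := run_prefix inp qs.
rewrite map_rcons !run_rcons IH ?(ltnW sq') // run_x !rcons_cat !drop_size_cat //.
congr (_ ++ rcons _ _); apply: exec_reloc => j.
rewrite /call_reg nth_odflt ?(read_call_ref _ env_rs) ?sx ?(ltnW sq') //.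
by rewrite size_cat leq_add2l sx ltnW.
Qed.

Lemma stores_call (Q : slp F) env inp rs :
  stores env rs inp ->
  let nq := size (slp_instrs Q) in
  stores (run env (map (reloc (call_reg (size env) nq rs)) (slp_instrs Q)))
    (map (call_ref (size env) nq rs) (slp_outs Q)) (slp_eval Q inp).
Proof.
move=> env_rs nq; rewrite (run_call env_rs) //.
have [x run_x sx] := run_prefix inp (slp_instrs Q).
rewrite run_x drop_size_cat //; split.
  apply/allP => _ /mapP[j _ ->]; rewrite size_cat sx.
  by apply: call_ref_lt; case: env_rs.
rewrite /slp_eval -/(run _ _) run_x -map_comp; apply: eq_map => j /=.
by rewrite (read_call_ref _ env_rs) ?sx.
Qed.

Definition call (m0 : nat) (Q : slp F) (st : seq (instr F)) rs
    : seq (instr F) * seq (option nat) :=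
  let base := (m0 + size st)%N in
  let nq := size (slp_instrs Q) in
  (st ++ map (reloc (call_reg base nq rs)) (slp_instrs Q),
   map (call_ref base nq rs) (slp_outs Q)).

Lemma call_extends m0 Q st rs : extends st (call m0 Q st rs).1 (size (slp_instrs Q)).
Proof. by eexists; first reflexivity; rewrite size_map. Qed.

Lemma stores_run_call env0 Q st rs inp :
  stores (run env0 st) rs inp ->
  stores (run env0 (call (size env0) Q st rs).1) (call (size env0) Q st rs).2
    (slp_eval Q inp).
Proof. by rewrite /call run_cat -size_run; apply: stores_call. Qed.

Lemma stores_extends env0 st st' c rs v :
  extends st st' c -> stores (run env0 st) rs v -> stores (run env0 st') rs v.
Proof.
case=> e -> _; rewrite run_cat.
by have [x -> _] := run_prefix (run env0 st) e; apply: stores_catr.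
Qed.

Definition slp_of (m0 : nat) ins rs : slp F :=
  SLP ins (map (odflt (m0 + size ins)%N) rs).

Lemma slp_eval_of inp ins rs c :
  stores (run inp ins) rs c -> slp_eval (slp_of (size inp) ins rs) inp = c.
Proof.
case=> _ <-; rewrite /slp_eval -/(run _ _) -map_comp; apply: eq_map => r /=.
by rewrite nth_odflt ?size_run.
Qed.

End StraightLinePrograms.

Definition positive_factors (ps : seq (nat * nat)) : bool :=
  all (fun pe => (0 < pe.1) && (0 < pe.2)) ps.

Lemma fvalue_cat ps ps' : fvalue (ps ++ ps') = fvalue ps * fvalue ps'.
Proof. by rewrite /fvalue big_cat. Qed.

Lemma fvalue_gt0 ps : positive_factors ps -> 0 < fvalue ps.
Proof.
move=> /allP ps_pos; rewrite /fvalue big_seq_cond.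
by apply: prodn_cond_gt0 => pe /andP[/ps_pos /andP[p_gt0 _] _]; rewrite expn_gt0 p_gt0.
Qed.

Lemma dvdn_fvalue ps pe : positive_factors ps -> pe \in ps -> pe.1 %| fvalue ps.
Proof.
move=> /allP ps_pos pe_ps; have /andP[_ e_gt0] := ps_pos _ pe_ps.
rewrite /fvalue (big_rem _ pe_ps) /= dvdn_mulr //.
by rewrite -(prednK e_gt0) expnS dvdn_mulr.
Qed.

Lemma divn_fvalue_catl ps ps' pe :
  positive_factors ps -> pe \in ps ->
  fvalue (ps ++ ps') %/ pe.1 = fvalue ps' * (fvalue ps %/ pe.1).
Proof. by move=> pos_ps pe_ps; rewrite fvalue_cat mulnC muln_divA // dvdn_fvalue. Qed.

Lemma divn_fvalue_catr ps ps' pe :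
  positive_factors ps' -> pe \in ps' ->
  fvalue (ps ++ ps') %/ pe.1 = fvalue ps * (fvalue ps' %/ pe.1).
Proof. by move=> pos_ps pe_ps; rewrite fvalue_cat muln_divA // dvdn_fvalue. Qed.

Lemma trunc_log_mul p a b : 1 < p -> 0 < a -> 0 < b ->
  trunc_log p a + trunc_log p b <= trunc_log p (a * b).
Proof. by move=> p_gt1 a_gt0 b_gt0; rewrite trunc_log_max // expnD leq_mul // trunc_logP. Qed.

Lemma trunc_log_le_up_log p n : 1 < p -> 0 < n -> trunc_log p n <= up_log p n.
Proof.
move=> p_gt1 n_gt0; rewrite -(leq_exp2l _ _ p_gt1).
exact: leq_trans (trunc_logP p_gt1 n_gt0) (up_logP _ p_gt1).
Qed.

Section FastPowers.
Variables (F : fieldType) (Q : slp F) (m0 : nat) (ctx_refs : seq (option nat)).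
Local Notation prog := (seq (instr F) * seq (option nat))%type.
Local Notation cost_Q := (size (slp_instrs Q)).

Definition compose st r1 r2 : prog := call m0 Q st (ctx_refs ++ r1 ++ r2).

(* [k] is fuel: [power k st r m] needs [m <= k] and [divisor_powers k] needs
   [size ps <= 2 ^ k]. *)
Fixpoint power (k : nat) st r (m : nat) : prog :=
  if k is k'.+1 then
    if 1 < m then
      let half := power k' st r m./2 in
      let sq := compose half.1 half.2 half.2 in
      if odd m then compose sq.1 sq.2 r else sq
    else (st, r)
  else (st, r).

Definition divisor_powers_base st r (ps : seq (nat * nat)) : prog :=
  if ps is pe :: _ then power (pe.1 ^ pe.2.-1) st r (pe.1 ^ pe.2.-1) else (st, [::]).

Fixpoint divisor_powers (k : nat) st r (ps : seq (nat * nat)) : prog :=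
  if k is k'.+1 then
    if 1 < size ps then
      let A := take (size ps)./2 ps in
      let B := drop (size ps)./2 ps in
      let rB := power (fvalue B) st r (fvalue B) in
      let sA := divisor_powers k' rB.1 rB.2 A in
      let rA := power (fvalue A) sA.1 r (fvalue A) in
      let sB := divisor_powers k' rA.1 rA.2 B in
      (sB.1, sA.2 ++ sB.2)
    else divisor_powers_base st r ps
  else divisor_powers_base st r ps.

Lemma compose_extends st r1 r2 : extends st (compose st r1 r2).1 cost_Q.
Proof. exact: call_extends. Qed.

Lemma power_extends k st r m :
  extends st (power k st r m).1 (2 * trunc_log 2 m * cost_Q).
Proof.
elim: k m => [|k IH] m /=; first exact: extends_refl.
case: ltnP => [m_gt1 | _]; last exact: extends_refl.
set half := power k st r m./2.
have ext_sq := extends_trans (IH m./2) (compose_extends half.1 half.2 half.2).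
rewrite (trunc_log2S m_gt1); case: odd.
  by apply: extends_le (extends_trans ext_sq (compose_extends _ _ r)); lia.
by apply: extends_le ext_sq; lia.
Qed.

Lemma divisor_powers_base_extends st r ps :
  positive_factors ps ->
  extends st (divisor_powers_base st r ps).1 (2 * trunc_log 2 (fvalue ps) * cost_Q).
Proof.
case: ps => [|[p e] ps] /= => [_|]; first exact: extends_refl.
case/andP=> /andP[p_gt0 e_gt0] pos_ps; apply: extends_le (power_extends _ _ _ _).
rewrite leq_mul2r leq_mul2l leq_trunc_log ?orbT //.
rewrite /fvalue big_cons -/(fvalue ps) /=.
by rewrite (leq_trans (leq_pexp2l p_gt0 (leq_pred e))) ?leq_pmulr ?fvalue_gt0.
Qed.

Lemma divisor_powers_extends k st r ps :
  positive_factors ps ->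
  extends st (divisor_powers k st r ps).1
    (2 * trunc_log 2 (fvalue ps) * k.+1 * cost_Q).
Proof.
elim: k st r ps => [|k IH] st r ps pos_ps /=.
  by rewrite muln1; apply: divisor_powers_base_extends.
case: ltnP => _; last first.
  apply: extends_le (divisor_powers_base_extends _ _ pos_ps).
  by rewrite leq_mul2r leq_pmulr ?orbT.
set A := take _ ps; set B := drop _ ps.
have [pos_A pos_B] : positive_factors A /\ positive_factors B.
  by apply/andP; rewrite -all_cat cat_take_drop.
set rB := power (fvalue B) st r (fvalue B).
set sA := divisor_powers k rB.1 rB.2 A.
set rA := power (fvalue A) sA.1 r (fvalue A).
have ext := extends_trans (extends_trans (extends_trans
  (power_extends _ st r _) (IH rB.1 rB.2 A pos_A)) (power_extends _ sA.1 r _))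
  (IH rA.1 rA.2 B pos_B).
apply: extends_le ext.
have := trunc_log_mul (isT : 1 < 2) (fvalue_gt0 pos_A) (fvalue_gt0 pos_B).
rewrite -fvalue_cat cat_take_drop => le_log.
set lA := trunc_log 2 (fvalue A); set lB := trunc_log 2 (fvalue B).
have -> : 2 * lB * cost_Q + 2 * lA * k.+1 * cost_Q + 2 * lA * cost_Q
  + 2 * lB * k.+1 * cost_Q = 2 * (lA + lB) * k.+2 * cost_Q by lia.
by rewrite leq_mul // leq_mul // leq_mul2l le_log.
Qed.

Section Correctness.
Variables (env0 ctx : seq F) (val : nat -> seq F).
Hypotheses (size_env0 : size env0 = m0) (env0_ctx : stores env0 ctx_refs ctx).
Hypothesis Q_add : forall a b, slp_eval Q (ctx ++ val a ++ val b) = val (a + b).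
Local Notation stored st r v := (stores (run env0 st) r v).

Lemma stores_compose st r1 r2 a b :
  stored st r1 (val a) -> stored st r2 (val b) ->
  stored (compose st r1 r2).1 (compose st r1 r2).2 (val (a + b)).
Proof.
move=> st_r1 st_r2; rewrite -Q_add /compose -size_env0; apply: stores_run_call.
apply: stores_cat (stores_cat st_r1 st_r2).
by have [x -> _] := run_prefix env0 st; apply: stores_catr.
Qed.

Lemma stores_power k st r m a :
  0 < m <= k -> stored st r (val a) ->
  stored (power k st r m).1 (power k st r m).2 (val (a * m)).
Proof.
elim: k m => [|k IH] m m_bnd st_r /=; first by lia.
case: ltnP => [m_gt1 | m_le1]; last first.
  have -> : m = 1 by lia.
  by rewrite muln1.
have st_sq := stores_compose (IH m./2 ltac:(lia) st_r) (IH m./2 ltac:(lia) st_r).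
have -> : a * m = a * m./2 + a * m./2 + a * odd m.
  by rewrite -mulnDr -mulnDr addnn addnC odd_double_half.
case: ifP => _; rewrite ?muln1 ?muln0 ?addn0 //.
apply: stores_compose st_sq (stores_extends _ st_r).
exact: extends_trans (power_extends _ _ _ _) (compose_extends _ _ _).
Qed.

Lemma stores_divisor_powers_base st r ps a :
  size ps <= 1 -> positive_factors ps -> stored st r (val a) ->
  stored (divisor_powers_base st r ps).1 (divisor_powers_base st r ps).2
    (flatten [seq val (a * (fvalue ps %/ pe.1)) | pe <- ps]).
Proof.
case: ps => [|[p e] [|//]] _ /=; first by split.
rewrite andbT cats0 => /andP[p_gt0 e_gt0] st_r.
have -> : fvalue [:: (p, e)] %/ p = p ^ e.-1.
  by rewrite /fvalue big_seq1 -(prednK e_gt0) expnS mulKn.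
by apply: stores_power => //; rewrite leqnn expn_gt0 p_gt0.
Qed.

Lemma stores_divisor_powers k st r ps a :
  size ps <= 2 ^ k -> positive_factors ps -> stored st r (val a) ->
  stored (divisor_powers k st r ps).1 (divisor_powers k st r ps).2
    (flatten [seq val (a * (fvalue ps %/ pe.1)) | pe <- ps]).
Proof.
elim: k st r ps a => [|k IH] st r ps a size_ps pos_ps st_r /=.
  exact: stores_divisor_powers_base.
case: ltnP => [ps_gt1 | ps_le1]; last exact: stores_divisor_powers_base.
set A := take _ ps; set B := drop _ ps.
have ps_AB : ps = A ++ B by rewrite cat_take_drop.
have [pos_A pos_B] : positive_factors A /\ positive_factors B.
  by apply/andP; rewrite -all_cat -ps_AB.
have [size_A size_B] : size A <= 2 ^ k /\ size B <= 2 ^ k.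
  by rewrite size_take size_drop; move: size_ps; rewrite expnS; case: ifP; lia.
set rB := power (fvalue B) st r (fvalue B).
have st_rB : stored rB.1 rB.2 (val (a * fvalue B)).
  by apply: stores_power; rewrite ?leqnn ?fvalue_gt0.
set sA := divisor_powers k rB.1 rB.2 A.
have st_sA : stored sA.1 sA.2 _ := IH _ _ A _ size_A pos_A st_rB.
set rA := power (fvalue A) sA.1 r (fvalue A).
have st_rA : stored rA.1 rA.2 (val (a * fvalue A)).
  apply: stores_power; rewrite ?leqnn ?fvalue_gt0 //.
  exact: stores_extends (extends_trans (power_extends _ _ _ _)
    (divisor_powers_extends _ _ _ pos_A)) st_r.
have st_sB := IH _ _ B _ size_B pos_B st_rA.
rewrite ps_AB map_cat flatten_cat; apply: stores_cat.
  have -> : [seq val (a * (fvalue (A ++ B) %/ pe.1)) | pe <- A]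
          = [seq val (a * fvalue B * (fvalue A %/ pe.1)) | pe <- A].
    by apply/eq_in_map => pe pe_A; rewrite divn_fvalue_catl // mulnA.
  exact: stores_extends (extends_trans (power_extends _ _ _ _)
    (divisor_powers_extends _ _ _ pos_B)) st_sA.
have -> : [seq val (a * (fvalue (A ++ B) %/ pe.1)) | pe <- B]
        = [seq val (a * fvalue A * (fvalue B %/ pe.1)) | pe <- B].
  by apply/eq_in_map => pe pe_B; rewrite divn_fvalue_catr // mulnA.
exact: st_sB.
Qed.

End Correctness.
End FastPowers.

Local Open Scope ring_scope.

Theorem proposition3 :
  exists K : nat,
  forall (F : finFieldType) (M C : nat -> nat),
    mul_cost_bound F M -> modcomp_cost_bound F C ->
  forall (n : nat) (ps : seq (nat * nat)),
    factored_form ps ->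
    let d := fvalue ps in
    let l := size ps in
    exists P : slp F,
      (slp_cost P <= K * (C n * (up_log 2 l).+1 * (up_log 2 d).+1 + l * M n))%N /\
      forall (f s : {poly F}) (t : nat),
        size f = n.+1 ->
        s = 'X ^+ (#|F| ^ t) %% f ->
        slp_eval P (coefs n.+1 f ++ coefs n s) =
          flatten [seq coefs n (sigma_pow f s (d %/ pe.1)) | pe <- ps].
Proof.
exists 2%N => F M C _ C_modcomp n ps /andP[_ ps_prime] d l.
have pos_ps : positive_factors ps.
  by apply: sub_all ps_prime => pe /andP[/prime_gt0 -> ->].
have [Q [cost_Q Q_modcomp]] := C_modcomp n.
set prog := divisor_powers Q (n.+1 + n) (input_refs 0 n.+1) (up_log 2 l) [::]
  (input_refs n.+1 n) ps.
exists (slp_of (n.+1 + n) prog.1 prog.2); split.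
  have [e /= -> size_e] := divisor_powers_extends Q (n.+1 + n) (input_refs 0 n.+1)
    (up_log 2 l) [::] (input_refs n.+1 n) pos_ps.
  have le_log := trunc_log_le_up_log (isT : (1 < 2)%N) (fvalue_gt0 pos_ps).
  have := leq_mul (leq_mul (leqW le_log) (leqnn (up_log 2 l).+1)) cost_Q.
  rewrite /slp_cost /= /d; move: size_e; lia.
move=> f s t size_f s_frob; rewrite -/(frob_mod f t) in s_frob.
have size_inp : size (coefs n.+1 f ++ coefs n s) = (n.+1 + n)%N.
  by rewrite size_cat !size_coefs.
rewrite -size_inp; apply: slp_eval_of.
pose val a := coefs n (frob_mod f (t * a)%N).
have -> : [seq coefs n (sigma_pow f s (d %/ pe.1)) | pe <- ps]
        = [seq val (1 * (fvalue ps %/ pe.1))%N | pe <- ps].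
  by apply/eq_map => pe; rewrite s_frob sigma_pow_frob_mod mul1n.
apply: (stores_divisor_powers (val := val)) => //.
- have := stores_input_refs [::] (coefs n.+1 f) (coefs n s).
  by rewrite size_coefs; apply.
- by move=> a b; rewrite Q_modcomp ?size_frob_mod // frob_mod_comp -mulnDr.
- exact: up_logP.
- have := stores_input_refs (coefs n.+1 f) (coefs n s) [::].
  by rewrite cats0 !size_coefs /val muln1 -s_frob.
Qed.
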